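(* Let $F=\{f_i\}_{i=1}^N$ be a frame for an $n$-dimensional Hilbert space $\mathcal{H}_n$ with frame operator $S_F$. Let $L=\max\{\|f_i\|\,\|S_F^{-1}f_i\|:1\le i\le N\}$, $\eta_1=\{i:\|f_i\|\,\|S_F^{-1}f_i\|=L\}$, $\eta_2=\{1,\dots,N\}\setminus\eta_1$, and $H_j=\mathrm{span}\{f_i:i\in\eta_j\}$ for $j=1,2$. Assume (i) $H_1\cap H_2=\{0\}$; (ii) $\|f_i\|=c$ for all $i\in\eta_1$, for some constant $c>0$; (iii) the set $\{f_i:i\in\eta_2\}$ is linearly independent. Then for every $p>2$ the canonical dual frame $S_F^{-1}F=\{S_F^{-1}f_i\}_{i=1}^N$ is a $1$-erasure Frobenius-optimal dual of $F$, i.e. $S_F^{-1}F\in\zeta_{\mathfrak{F}}^{(1),p}(F)$.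
   Context: $F$ is a frame for $\mathcal{H}_n$ if there are $0<A'\le B'$ with $A'\|f\|^2\le\sum_i|\langle f,f_i\rangle|^2\le B'\|f\|^2$ for all $f$. Analysis operator $T_Ff=(\langle f,f_i\rangle)_{i=1}^N$, frame operator $S_F=T_F^*T_F$ (positive invertible). $G=\{g_i\}_{i=1}^N$ is a dual of $F$ if $f=\sum_i\langle f,f_i\rangle g_i$ for all $f\in\mathcal{H}_n$. For a dual $G$ and $p>1$, $\mathrm{AE}_{\mathfrak{F}}^{(1),p}(F,G)=\{\frac1N\sum_{D\in\mathcal{D}^{(1)}}\|T_G^*DT_F\|_{\mathfrak{F}}^p\}^{1/p}=\{\frac1N\sum_{i=1}^N(\|f_i\|\,\|g_i\|)^p\}^{1/p}$, where $\mathcal{D}^{(1)}$ is the set of $N\times N$ diagonal matrices with exactly one diagonal entry $1$ and the rest $0$, and $\|\cdot\|_{\mathfrak{F}}$ is the Frobenius norm. $\zeta_{\mathfrak{F}}^{(1),p}(F)$ is the set of duals $G$ of $F$ minimizing $\mathrm{AE}_{\mathfrak{F}}^{(1),p}(F,G)$ over all duals of $F$. *)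

(* R : realType (needed for real exponents p), the Hilbert
   space H_n is C^n with C := R[i] (complex numbers over R), vectors are
   row vectors 'rV[R[i]]_n with the standard inner product. *)
From HB Require Import structures.
From mathcomp Require Import all_boot all_order all_algebra.
From mathcomp Require Import all_classical all_reals all_analysis.
From mathcomp Require Import complex.
Set Implicit Arguments. Unset Strict Implicit. Unset Printing Implicit Defensive.
Import Order.TTheory GRing.Theory Num.Theory.
Local Open Scope ring_scope.

Section FrameDefs.
Variables (R : realType) (n N : nat).
Local Notation C := (R[i]).
Local Notation vec := 'rV[C]_n.

Definition abs2 (z : C) : R := complex.Re (z * z^*).

Definition inner (f g : vec) : C := \sum_(k < n) f 0 k * (g 0 k)^*.

Definition vnorm (f : vec) : R := Num.sqrt (complex.Re (inner f f)).

Definition is_frame (F : 'I_N -> vec) : Prop :=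
  exists A B : R, 0 < A /\ A <= B /\
    forall f : vec,
      A * vnorm f ^+ 2 <= \sum_(i < N) abs2 (inner f (F i)) /\
      \sum_(i < N) abs2 (inner f (F i)) <= B * vnorm f ^+ 2.

(* Frame operator S_F = T_F^* T_F, as the matrix acting on row vectors by
   right multiplication:  f *m frame_op F = \sum_i <f, f_i> f_i. *)
Definition frame_op (F : 'I_N -> vec) : 'M[C]_n :=
  \sum_(i < N) (map_mx (fun z : C => z^*) (F i))^T *m F i.

Definition canonical_dual (F : 'I_N -> vec) : 'I_N -> vec :=
  fun i => F i *m invmx (frame_op F).

Definition is_dual (F G : 'I_N -> vec) : Prop :=
  forall f : vec, f = \sum_(i < N) inner f (F i) *: G i.

Definition AE1p (p : R) (F G : 'I_N -> vec) : R :=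
  ((N%:R)^-1 * \sum_(i < N) (vnorm (F i) * vnorm (G i)) `^ p) `^ (p^-1).

Definition optimal_dual (p : R) (F G : 'I_N -> vec) : Prop :=
  is_dual F G /\ forall G' : 'I_N -> vec, is_dual F G' -> AE1p p F G <= AE1p p F G'.

Definition Lmax (F : 'I_N -> vec) : R :=
  \big[Num.max/0]_(i < N) (vnorm (F i) * vnorm (canonical_dual F i)).

Definition eta1 (F : 'I_N -> vec) : {set 'I_N} :=
  [set i | vnorm (F i) * vnorm (canonical_dual F i) == Lmax F].

Definition eta2 (F : 'I_N -> vec) : {set 'I_N} := ~: eta1 F.

Definition span_of (F : 'I_N -> vec) (eta : {set 'I_N}) : 'M[C]_n :=
  (\sum_(i in eta) <<F i>>)%MS.

Definition lin_indep_on (F : 'I_N -> vec) (eta : {set 'I_N}) : Prop :=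
  forall a : 'I_N -> C,
    \sum_(i in eta) a i *: F i = 0 -> forall i, i \in eta -> a i = 0.

End FrameDefs.

(* Write an arbitrary dual as G = S^-1 F + H.  Duality forces
   sum_i <y, h_i> f_i = 0 for every y; splitting this sum along eta1 and eta2
   and using H_1 /\ H_2 = 0 and the independence of {f_i | i in eta2} gives
   h_i = 0 on eta2.  The canonical dual is orthogonal to every such H:
   sum_i <h_i, S^-1 f_i> = tr (S^-* sum_i f_i^* h_i) = 0, hence
   sum_(eta1) ||g_i||^2 >= sum_(eta1) ||S^-1 f_i||^2, and since ||f_i|| = c on
   eta1 the numbers (||f_i|| ||g_i||)^2 average at least L^2 over eta1.
   Convexity of t |-> t^(p/2) for p > 2 upgrades this to
   sum_(eta1) (||f_i|| ||g_i||)^p >= |eta1| L^p, while the eta2 terms are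
   those of the canonical dual. *)

From HB Require Import structures.
From mathcomp Require Import all_boot all_order all_algebra.
From mathcomp Require Import all_classical all_reals all_analysis.
From mathcomp Require Import complex sesquilinear spectral.
From mathcomp Require Import ring lra.
Import Order.TTheory GRing.Theory Num.Theory.
Set Implicit Arguments. Unset Strict Implicit. Unset Printing Implicit Defensive.
Local Open Scope ring_scope.
Local Open Scope sesquilinear_scope.

Section InnerProduct.
Variables (R : realType) (n : nat).
Local Notation C := R[i].
Local Notation vec := 'rV[C]_n.
Implicit Types f g : vec.

Lemma innerE f g : inner f g = dotmx f g.
Proof. by rewrite dotmxE !mxE; apply: eq_bigr => k _; rewrite !mxE. Qed.

Lemma inner_conj f g : (inner f g)^* = inner g f.
Proof. by rewrite !innerE [RHS]hermC /= expr0 mul1r. Qed.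

Lemma innerZl a f g : inner (a *: f) g = a * inner f g.
Proof. by rewrite /inner mulr_sumr; apply: eq_bigr => k _; rewrite !mxE mulrA. Qed.

Lemma inner_suml I (r : seq I) (P : pred I) (h : I -> vec) g :
  inner (\sum_(i <- r | P i) h i) g = \sum_(i <- r | P i) inner (h i) g.
Proof. by rewrite !innerE linear_sumlz; apply: eq_bigr => i _; rewrite innerE. Qed.

Lemma inner_self_ge0 f : 0 <= inner f f.
Proof. by rewrite innerE dnorm_ge0. Qed.

Lemma vnorm_ge0 f : 0 <= vnorm f.
Proof. exact: sqrtr_ge0. Qed.

Lemma vnorm_sqr f : vnorm f ^+ 2 = complex.Re (inner f f).
Proof.
by have := inner_self_ge0 f; rewrite lecE => /andP[_ ?]; rewrite sqr_sqrtr.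
Qed.

Lemma vnorm_eq0 f : (vnorm f == 0) = (f == 0).
Proof.
have <- : (inner f f == 0) = (f == 0) by rewrite innerE dnorm_eq0.
rewrite /vnorm sqrtr_eq0.
have := inner_self_ge0 f; case: (inner f f) => a b.
rewrite lecE /= => /andP[/eqP-> a_ge0].
by rewrite eq_complex /= eqxx andbT eq_le a_ge0 andbT.
Qed.

Lemma vnormD_sqr f g :
  vnorm (f + g) ^+ 2 = vnorm f ^+ 2 + vnorm g ^+ 2 + 2 * complex.Re (inner g f).
Proof.
rewrite !vnorm_sqr !innerE hnormD /= expr0 mul1r -!innerE inner_conj !raddfD /=.
rewrite -[inner f g]inner_conj; case: (inner g f) => a b /=; ring.
Qed.

Lemma sum_inner_scale N (A B : 'I_N -> vec) f :
  \sum_(i < N) inner f (A i) *: B i = f *m \sum_(i < N) (A i)^t* *m B i.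
Proof.
rewrite mulmx_sumr; apply: eq_bigr => i _.
by rewrite mulmxA [f *m _]mx11_scalar mul_scalar_mx innerE dotmxE.
Qed.

End InnerProduct.

Section Frames.
Variables (R : realType) (n N : nat) (F : 'I_N -> 'rV[R[i]]_n).

Lemma frame_opE : frame_op F = \sum_(i < N) (F i)^t* *m F i.
Proof. by apply: eq_bigr => i _; rewrite map_trmx. Qed.

Lemma mul_frame_op f : f *m frame_op F = \sum_(i < N) inner f (F i) *: F i.
Proof. by rewrite sum_inner_scale frame_opE. Qed.

Lemma frame_energyE f :
  \sum_(i < N) abs2 (inner f (F i)) = complex.Re (inner (f *m frame_op F) f).
Proof.
rewrite mul_frame_op inner_suml raddf_sum; apply: eq_bigr => i _.
by rewrite innerZl -[inner (F i) f]inner_conj.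
Qed.

Lemma frame_op_unit : is_frame F -> frame_op F \in unitmx.
Proof.
move=> [A [B [A_gt0 [_ bounds]]]]; rewrite -row_free_unit.
apply: inj_row_free => f fS0; apply/eqP; rewrite -vnorm_eq0 -sqrf_eq0 eq_le sqr_ge0 andbT.
have [+ _] := bounds f.
by rewrite frame_energyE fS0 innerE linear0l raddf0 pmulr_rle0.
Qed.

Lemma canonical_dual_is_dual : is_frame F -> is_dual F (canonical_dual F).
Proof.
move=> frameF f; rewrite /canonical_dual.
under eq_bigr => i _ do rewrite scalemxAl.
by rewrite -mulmx_suml -mul_frame_op mulmxK // frame_op_unit.
Qed.

Lemma is_dual_synthesis G : is_dual F G -> \sum_(i < N) (F i)^t* *m G i = 1%:M.
Proof.
by move=> dualG; apply/row_matrixP => j; rewrite rowE -sum_inner_scale -dualG row1.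
Qed.

Lemma lin_comb_eq0_compl (A : {set 'I_N}) (a : 'I_N -> R[i]) :
  (span_of F A :&: span_of F (~: A) <= (0 : 'M[R[i]]_n))%MS -> lin_indep_on F (~: A) ->
  \sum_(i < N) a i *: F i = 0 -> {in ~: A, forall i, a i = 0}.
Proof.
move=> capA0 indepAC comb0; apply: indepAC.
set v := \sum_(i in ~: A) _.
have span_comb (B : {set 'I_N}) : ((\sum_(i in B) a i *: F i)%R <= span_of F B)%MS.
  by apply: summx_sub_sums => i _; rewrite scalemx_sub ?genmxE.
have vE : v = - \sum_(i in A) a i *: F i.
  apply/eqP; rewrite -addr_eq0 addrC; apply/eqP; rewrite -[RHS]comb0.
  by rewrite [RHS](bigID (mem A)) /=; congr (_ + _); apply: eq_bigl => i; rewrite inE.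
apply/eqP; rewrite -submx0; apply: submx_trans capA0.
by rewrite sub_capmx span_comb andbT vE -scaleN1r scalemx_sub ?span_comb.
Qed.

End Frames.

Section CanonicalDual.
Variables (R : realType) (n N : nat) (F G : 'I_N -> 'rV[R[i]]_n).
Hypotheses (frameF : is_frame F) (dualG : is_dual F G).
Local Notation u := (canonical_dual F).

Lemma synthesis_dual_diff : \sum_(i < N) (F i)^t* *m (G i - u i) = 0.
Proof.
under eq_bigr do rewrite mulmxBr.
by rewrite sumrB !is_dual_synthesis ?subrr //; exact: canonical_dual_is_dual.
Qed.

Lemma sum_inner_dual_diff y : \sum_(i < N) inner y (G i - u i) *: F i = 0.
Proof.
rewrite sum_inner_scale.
have -> : \sum_(i < N) (G i - u i)^t* *m F i = (\sum_(i < N) (F i)^t* *m (G i - u i))^t*.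
  rewrite raddf_sum map_mx_sum; apply: eq_bigr => i _.
  by rewrite /= trmx_mul map_mxM trmxCK.
by rewrite synthesis_dual_diff trmx0 map_mx0 mulmx0.
Qed.

Lemma sum_inner_dual_diff_canonical : \sum_(i < N) inner (G i - u i) (u i) = 0.
Proof.
pose P := (invmx (frame_op F))^t*.
have innerE_tr i : inner (G i - u i) (u i) = \tr (P *m ((F i)^t* *m (G i - u i))).
  rewrite innerE dotmxE /canonical_dual trmx_mul map_mxM mulmxA -trace_mx11.
  by rewrite -mulmxA mxtrace_mulC mulmxA.
rewrite (eq_bigr _ (fun i _ => innerE_tr i)) -raddf_sum -mulmx_sumr.
by rewrite synthesis_dual_diff mulmx0 raddf0.
Qed.

Lemma sum_vnorm_dual_sqr :
  \sum_(i < N) vnorm (G i) ^+ 2 =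
  \sum_(i < N) vnorm (u i) ^+ 2 + \sum_(i < N) vnorm (G i - u i) ^+ 2.
Proof.
have cross0 : \sum_(i < N) 2 * complex.Re (inner (G i - u i) (u i)) = 0.
  by rewrite -mulr_sumr -raddf_sum sum_inner_dual_diff_canonical raddf0 mulr0.
transitivity (\sum_(i < N) (vnorm (u i) ^+ 2 + vnorm (G i - u i) ^+ 2 +
                             2 * complex.Re (inner (G i - u i) (u i)))).
  by apply: eq_bigr => i _; rewrite -vnormD_sqr addrC subrK.
by rewrite !big_split /= cross0 addr0.
Qed.

Lemma canonical_dual_sqr_le_on (A : {set 'I_N}) :
  {in ~: A, forall i, G i = u i} ->
  \sum_(i in A) vnorm (u i) ^+ 2 <= \sum_(i in A) vnorm (G i) ^+ 2.
Proof.
move=> eq_off_A; have := sum_vnorm_dual_sqr.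
rewrite [\sum_(i < N) vnorm (G i) ^+ 2](bigID (mem A)) /=.
rewrite [\sum_(i < N) vnorm (u i) ^+ 2](bigID (mem A)) /=.
have -> : \sum_(i < N | i \notin A) vnorm (G i) ^+ 2 =
          \sum_(i < N | i \notin A) vnorm (u i) ^+ 2.
  by apply: eq_bigr => i iAC; rewrite eq_off_A ?inE.
have : 0 <= \sum_(i < N) vnorm (G i - u i) ^+ 2 by apply: sumr_ge0 => i _; apply: sqr_ge0.
lra.
Qed.

Lemma canonical_dual_error_sqr_le_on (A : {set 'I_N}) (c : R) :
  {in ~: A, forall i, G i = u i} -> {in A, forall i, vnorm (F i) = c} ->
  \sum_(i in A) (vnorm (F i) * vnorm (u i)) ^+ 2 <=
  \sum_(i in A) (vnorm (F i) * vnorm (G i)) ^+ 2.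
Proof.
move=> eq_off_A normF.
under eq_bigr => i iA do rewrite exprMn normF //.
under [X in _ <= X]eq_bigr => i iA do rewrite exprMn normF //.
by rewrite -!mulr_sumr ler_wpM2l ?sqr_ge0 ?canonical_dual_sqr_le_on.
Qed.

Lemma dual_eq_canonical_compl (A : {set 'I_N}) :
  (span_of F A :&: span_of F (~: A) <= (0 : 'M[R[i]]_n))%MS -> lin_indep_on F (~: A) ->
  {in ~: A, forall i, G i = u i}.
Proof.
move=> capA0 indepAC i iAC; apply/eqP; rewrite -subr_eq0 -vnorm_eq0 -sqrf_eq0 vnorm_sqr.
have := lin_comb_eq0_compl (a := fun j => inner (G i - u i) (G j - u j)) capA0 indepAC.
by move=> /(_ (sum_inner_dual_diff _) i iAC) ->; rewrite raddf0.
Qed.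

End CanonicalDual.

Section PowerSums.
Variable R : realType.

Lemma powR_tangent_le (w K q : R) : 0 <= w -> 0 <= K -> 1 < q ->
  K `^ q + q * K `^ (q - 1) * (w - K) <= w `^ q.
Proof.
move=> w_ge0 K_ge0 q_gt1.
have q_gt0 : 0 < q by rewrite (lt_trans _ q_gt1).
have q1_gt0 : 0 < q - 1 by rewrite subr_gt0.
pose r := q / (q - 1).
have r_gt0 : 0 < r by rewrite divr_gt0.
have conj_qr : q^-1 + r^-1 = 1 by rewrite /r invf_div; field; rewrite gt_eqF.
set b := K `^ (q - 1).
(* Young's inequality with the conjugate exponents q and r *)
have := conjugate_powR w_ge0 (powR_ge0 K (q - 1)) q_gt0 r_gt0 conj_qr.
rewrite -/b -powRrM (_ : (q - 1) * r = q); last first.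
  by rewrite /r mulrC -mulrA mulVf ?mulr1 // gt_eqF.
move=> young.
have young_q : q * (w * b) <= w `^ q + (q - 1) * K `^ q.
  have -> : w `^ q + (q - 1) * K `^ q = q * (w `^ q / q + K `^ q / r).
    by rewrite /r; field; rewrite ?gt_eqF.
  by rewrite ler_wpM2l // ltW.
have Kb : K * b = K `^ q by rewrite /b mulr_powRB1.
have -> : K `^ q + q * b * (w - K) = q * (w * b) - (q - 1) * (K * b).
  by rewrite -Kb; ring.
by rewrite Kb lerBlDr.
Qed.

Lemma sum_powR_ge_const (I : finType) (A : {pred I}) (w : I -> R) (K q : R) :
  1 < q -> 0 <= K -> (forall i, 0 <= w i) ->
  \sum_(i in A) K <= \sum_(i in A) w i ->
  \sum_(i in A) K `^ q <= \sum_(i in A) w i `^ q.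
Proof.
move=> q_gt1 K_ge0 w_ge0 sumKw.
apply: le_trans (ler_sum _ (fun i _ => powR_tangent_le (w_ge0 i) K_ge0 q_gt1)).
rewrite big_split /= -mulr_sumr sumrB lerDl mulr_ge0 ?subr_ge0 //.
by rewrite mulr_ge0 ?powR_ge0 // ltW // (lt_trans _ q_gt1).
Qed.

Lemma powR_sqr_half (x p : R) : 0 <= x -> x `^ p = (x ^+ 2) `^ (p / 2).
Proof. by move=> x_ge0; rewrite -powR_mulrn // -powRrM mulrC divfK. Qed.

End PowerSums.

Lemma AE1p_le (R : realType) (n N : nat) (p : R) (F G G' : 'I_N -> 'rV[R[i]]_n) :
  0 < p ->
  \sum_(i < N) (vnorm (F i) * vnorm (G i)) `^ p <=
  \sum_(i < N) (vnorm (F i) * vnorm (G' i)) `^ p ->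
  AE1p p F G <= AE1p p F G'.
Proof.
move=> p_gt0 le_sums; have sum_ge0 H : 0 <= \sum_(i < N) H i `^ p :> R.
  by apply: sumr_ge0 => i _; apply: powR_ge0.
rewrite /AE1p ge0_ler_powR ?nnegrE ?mulr_ge0 ?invr_ge0 ?sum_ge0 ?ler_wpM2l //.
exact: ltW.
Qed.

Unset Implicit Arguments.

Theorem theorem3p2 (R : realType) (n N : nat) (F : 'I_N -> 'rV[R[i]]_n) :
  is_frame F ->
  (span_of F (eta1 F) :&: span_of F (eta2 F) <= (0 : 'M[R[i]]_n))%MS ->
  (exists c : R, 0 < c /\ forall i, i \in eta1 F -> vnorm (F i) = c) ->
  lin_indep_on F (eta2 F) ->
  forall p : R, 2 < p -> optimal_dual p F (canonical_dual F).
Proof.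
move=> frameF cap0 [c [_ normF]] indep p p_gt2.
split=> [|G dualG]; first exact: canonical_dual_is_dual.
have p_gt0 : 0 < p by rewrite (lt_trans _ p_gt2).
have G_off_eta1 := dual_eq_canonical_compl frameF dualG cap0 indep.
have err_le := canonical_dual_error_sqr_le_on frameF dualG G_off_eta1 normF.
apply: AE1p_le => //.
rewrite (bigID (mem (eta1 F))) [X in _ <= X](bigID (mem (eta1 F))) /=.
apply: lerD; last by apply: ler_sum => i i_eta2; rewrite G_off_eta1 ?finset.in_setC.
have Lmax_eta1 i : i \in eta1 F -> vnorm (F i) * vnorm (canonical_dual F i) = Lmax F.
  by rewrite inE => /eqP.
have half_p_gt1 : 1 < p / 2 by rewrite ltr_pdivlMr // mul1r.
under eq_bigr => i i_eta1 do rewrite powR_sqr_half ?mulr_ge0 ?vnorm_ge0 // Lmax_eta1 //.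
under [X in _ <= X]eq_bigr => i _ do rewrite powR_sqr_half ?mulr_ge0 ?vnorm_ge0 //.
apply: sum_powR_ge_const => [||i|]; rewrite ?sqr_ge0 //.
by under eq_bigr => i i_eta1 do rewrite -(Lmax_eta1 i) //.
Qed.
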